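(* The wall $W$ is bipartite and $3$-monotone: with $A:=\{(x,y)\in\mathbb{Z}^2: x+y\text{ even}\}$ and $B:=\{(x,y)\in\mathbb{Z}^2: x+y \text{ odd}\}$ as colour classes, each linearly ordered by $\preceq$, the edge set of $W$ is the union of three monotone matchings.
   Context: The wall is the infinite graph $W$ with vertex set $\mathbb{Z}^2$ and edge set $\{(x,y)(x+1,y): x,y\in\mathbb{Z}\}\cup\{(x,y)(x,y+1): x,y\in\mathbb{Z},\ x+y\text{ even}\}$; it is $3$-regular and planar. Define the linear order $\preceq$ on $\mathbb{Z}^2$ by $(x,y)\preceq(x',y')$ if $x+y<x'+y'$, or $x+y=x'+y'$ and $x\leq x'$. For a bipartite graph with linearly ordered colour classes $A$ and $B$, edges $ab$ and $a'b'$ ($a,a'\in A$, $b,b'\in B$) cross if $a\prec a'$ and $b'\prec b$; a matching is monotone if no two of its edges cross; the graph is $d$-monotone if its edge set is the union of $d$ monotone matchings. *)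

From Stdlib Require Import ZArith.
Open Scope Z_scope.

Definition vtx := (Z * Z)%type.

Definition wall_edge (u v : vtx) : Prop :=
  let '(x, y) := u in let '(x', y') := v in
     (y' = y /\ x' = x + 1)
  \/ (y' = y /\ x = x' + 1)
  \/ (x' = x /\ y' = y + 1 /\ Z.Even (x + y))
  \/ (x' = x /\ y = y' + 1 /\ Z.Even (x' + y')).

Definition inA (u : vtx) : Prop := Z.Even (fst u + snd u).
Definition inB (u : vtx) : Prop := Z.Odd (fst u + snd u).

Definition wle (u v : vtx) : Prop :=
  fst u + snd u < fst v + snd v \/
  (fst u + snd u = fst v + snd v /\ fst u <= fst v).
Definition wlt (u v : vtx) : Prop := wle u v /\ u <> v.

(* A set of edges between A and B, given as pairs (a, b) with a in A, b in B. *)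
Definition bipedges := vtx -> vtx -> Prop.

Definition is_matching (M : bipedges) : Prop :=
  (forall a b, M a b -> inA a /\ inB b /\ wall_edge a b) /\
  (forall a b b', M a b -> M a b' -> b = b') /\
  (forall a a' b, M a b -> M a' b -> a = a').

Definition cross (a b a' b' : vtx) : Prop := wlt a a' /\ wlt b' b.

Definition is_monotone_matching (M : bipedges) : Prop :=
  is_matching M /\
  (forall a b a' b', M a b -> M a' b' -> ~ cross a b a' b').

(** Every edge of the wall joins a vertex of A to one of B, and seen from its
    endpoint in A it is a translation by (1,0), (-1,0) or (0,1): vertical edges
    go upwards from even vertices only.  The edges of a fixed direction form a
    monotone matching, because a translation is strictly increasing for the
    order ⪯, so it cannot reverse the order of two left endpoints. *)

From Stdlib Require Import ZArith Lia.
Open Scope Z_scope.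

Definition shift (d u : vtx) : vtx := (fst u + fst d, snd u + snd d).

Lemma shift_inj (d u v : vtx) : shift d u = shift d v -> u = v.
Proof.
  destruct u as [x y], v as [x' y']; unfold shift; simpl.
  intros [= Hx Hy]; f_equal; lia.
Qed.

Lemma wle_shift (d u v : vtx) : wle (shift d u) (shift d v) <-> wle u v.
Proof. unfold wle, shift; simpl; lia. Qed.

Lemma wlt_shift (d u v : vtx) : wlt (shift d u) (shift d v) <-> wlt u v.
Proof.
  unfold wlt; rewrite wle_shift; split.
  - intros [Hle Hne]; split; [exact Hle | congruence].
  - intros [Hle Hne]; split; [exact Hle | now intros ?%shift_inj].
Qed.

Lemma wlt_asym (u v : vtx) : wlt u v -> ~ wlt v u.
Proof.
  destruct u as [x y], v as [x' y']; unfold wlt, wle; simpl.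
  intros [Huv Hne] [Hvu _]; apply Hne; f_equal; lia.
Qed.

Lemma wall_edge_parity (u v : vtx) :
  wall_edge u v -> Z.Odd ((fst u + snd u) + (fst v + snd v)).
Proof.
  destruct u as [x y], v as [x' y']; simpl.
  intros [[-> ->] | [[-> ->] | [[-> [-> _]] | [-> [-> _]]]]];
    [exists (x + y) | exists (x' + y) | exists (x + y) | exists (x + y')]; lia.
Qed.

Lemma wall_edge_bipartite (u v : vtx) :
  wall_edge u v -> (inA u /\ inB v) \/ (inB u /\ inA v).
Proof.
  intros [k Hk]%wall_edge_parity; unfold inA, inB.
  destruct (Z.Even_or_Odd (fst u + snd u)) as [[m Hm] | [m Hm]].
  - left; split; [exists m | exists (k - m)]; lia.
  - right; split; [exists m | exists (k - m)]; lia.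
Qed.

Lemma wall_edge_from_A (a b : vtx) : inA a -> inB b ->
  wall_edge a b <->
  b = shift (1, 0) a \/ b = shift (-1, 0) a \/ b = shift (0, 1) a.
Proof.
  destruct a as [x y], b as [x' y']; unfold inA, inB, shift; simpl.
  intros HA [k Hk]; split.
  - intros [[-> ->] | [[-> ->] | [[-> [-> _]] | [-> [-> [m Hm]]]]]].
    + left; f_equal; lia.
    + right; left; f_equal; lia.
    + right; right; f_equal; lia.
    + lia.
  - intros [[= -> ->] | [[= -> ->] | [= -> ->]]].
    + left; split; lia.
    + right; left; split; lia.
    + right; right; left; repeat split; [lia | exact HA].
Qed.

Definition translation_matching (d : vtx) : bipedges :=
  fun a b => inA a /\ inB b /\ wall_edge a b /\ b = shift d a.

Lemma translation_matching_monotone (d : vtx) :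
  is_monotone_matching (translation_matching d).
Proof.
  split; [split; [| split] |].
  - intros a b (HA & HB & Hab & _); auto.
  - intros a b b' (_ & _ & _ & ->) (_ & _ & _ & ->); reflexivity.
  - intros a a' b (_ & _ & _ & ->) (_ & _ & _ & Hb); exact (shift_inj d a a' Hb).
  - intros a b a' b' (_ & _ & _ & ->) (_ & _ & _ & ->) [Haa' Hba].
    apply (wlt_asym _ _ Hba); apply wlt_shift; exact Haa'.
Qed.

Theorem lemma11 :
  (forall u v : vtx, wall_edge u v ->
     (inA u /\ inB v) \/ (inB u /\ inA v)) /\
  (exists M1 M2 M3 : bipedges,
     is_monotone_matching M1 /\ is_monotone_matching M2 /\
     is_monotone_matching M3 /\
     (forall a b : vtx, inA a -> inB b ->
        (wall_edge a b <-> (M1 a b \/ M2 a b \/ M3 a b)))).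
Proof.
  split; [exact wall_edge_bipartite |].
  exists (translation_matching (1, 0)), (translation_matching (-1, 0)),
    (translation_matching (0, 1)).
  do 3 (split; [apply translation_matching_monotone |]).
  intros a b HA HB; unfold translation_matching.
  pose proof (wall_edge_from_A a b HA HB) as Hdir; split.
  - intros Hab; destruct (proj1 Hdir Hab) as [H | [H | H]]; tauto.
  - intros [(_ & _ & Hab & _) | [(_ & _ & Hab & _) | (_ & _ & Hab & _)]]; exact Hab.
Qed.
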